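(* Let $R=\mathbb C[S_1,\ldots,S_n]/I$ be a local algebra of dimension $n+2$ which is an $n$-factor, with a proper basis $\mu_1,\ldots,\mu_{n+2}$ (so $\mu_1=1$ and $\mu_2,\ldots,\mu_{n+1}$ are the images of $S_1,\ldots,S_n$). Suppose $B$ is a nondegenerate symmetric bilinear form on $R$ satisfying $B(\mu_ix,y)+B(x,\mu_iy)=0$ for all $i=2,\ldots,n+1$ and $x,y\in R$, and $B(1,1)=0$. Then: (1) $B(1,\mu_i)=0$ for $i=2,\ldots,n+1$; (2) $B(\mu_i,\mu_j)=-B(1,\mu_i\mu_j)$ for $i,j=2,\ldots,n+1$; (3) $B(\mu_i,\mu_{n+2})=0$ for $i=2,\ldots,n+2$, and $B(1,\mu_{n+2})\neq0$; (4) $\dim_{\mathbb C}\mathfrak m_R^2=1$ and $\mathfrak m_R^2=\langle\mu_{n+2}\rangle$; (5) if $B$ is normalized so that $B(1,\mu_{n+2})=-1$, then $B=B_0$.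
   Context: A local algebra means a finite-dimensional commutative associative unital $\mathbb C$-algebra with a unique maximal ideal $\mathfrak m_R$ and residue field $\mathbb C$. An $n$-factor is a quotient $\mathbb C[S_1,\ldots,S_n]/I$ in which the images of $S_1,\ldots,S_n$ are linearly independent (they lie in $\mathfrak m_R$). A $\mathbb C$-basis $\mu_1,\ldots,\mu_{n+2}$ of an $n$-factor $R$ is proper if $\mu_1=1$, $\mu_2,\ldots,\mu_{n+1}$ are the images of $S_1,\ldots,S_n$, $\mu_{n+2}$ can be expressed as a polynomial in $\mu_2,\ldots,\mu_{n+1}$, and every power $\mathfrak m_R^k$ is spanned by a subset of the basis vectors. When $\mathfrak m_R^2=\langle\mu_{n+2}\rangle$ is one-dimensional, $B_0$ is the symmetric bilinear form on $R$ defined by $B_0(\mu_1,\mu_j)=-\delta_{j,n+2}$ for all $j$, $B_0(\mu_i,\mu_{n+2})=-\delta_{i,1}$ for all $i$, and $B_0(\mu_i,\mu_j)=a_{ij}$ for $i,j=2,\ldots,n+1$, where $\mu_i\mu_j=a_{ij}\mu_{n+2}$ ($\delta$ is the Kronecker delta). *)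

From HB Require Import structures.
From mathcomp Require Import all_boot all_order all_algebra all_field.
Set Implicit Arguments. Unset Strict Implicit. Unset Printing Implicit Defensive.
Import Order.TTheory GRing.Theory Num.Theory.
Local Open Scope ring_scope.

Section LocalAlg.
Variables (F : fieldType) (R : falgType F).

Definition is_ideal (I : {vspace R}) : Prop :=
  forall r x, x \in I -> r * x \in I /\ x * r \in I.

Definition proper_ideal (I : {vspace R}) : Prop :=
  is_ideal I /\ (1 \notin I).

Definition maximal_ideal (I : {vspace R}) : Prop :=
  proper_ideal I /\
  forall J : {vspace R}, proper_ideal J -> (I <= J)%VS -> J = I.

(* R is a commutative local algebra with maximal ideal m and residue
   field F (i.e. R/m is one-dimensional over F). *)
Definition local_algebra_with (m : {vspace R}) : Prop :=
  [/\ forall x y : R, x * y = y * x,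
      maximal_ideal m,
      (forall J, maximal_ideal J -> J = m)
    & (\dim {:R} = (\dim m).+1)%N].

Definition ideal_pow (m : {vspace R}) (k : nat) : {vspace R} :=
  iter k (fun V => (m * V)%VS) fullv.

(* proper basis of an n-factor: mu`_0 = 1, mu`_1..mu`_n are the images of
   the generators S_1..S_n (they generate R as an algebra, lie in m and are
   linearly independent), mu`_(n+1) is a polynomial in them, and every power
   of m is spanned by a subset of the basis. *)
Definition proper_nfactor_basis (n : nat) (m : {vspace R})
    (mu : (n.+2).-tuple R) : Prop :=
  [/\ basis_of fullv mu /\ mu`_0 = 1,
      agenv <<[seq mu`_i | i <- iota 1 n]>>%VS = fullv,
      (forall i, (1 <= i <= n)%N -> mu`_i \in m),
      free [seq mu`_i | i <- iota 1 n] /\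
      mu`_(n.+1) \in agenv <<[seq mu`_i | i <- iota 1 n]>>%VS
    & forall k, exists J : bitseq, ideal_pow m k = <<mask J mu>>%VS].

(* a_ij : mu_i mu_j = a_ij mu_(n+2) *)
Definition a_coef (n : nat) (mu : (n.+2).-tuple R) (i j : nat) : F :=
  coord mu ord_max (mu`_i * mu`_j).

(* values of B_0 on basis (0-based indices: 0 ~ mu_1, n.+1 ~ mu_(n+2)) *)
Definition B0_basis (n : nat) (mu : (n.+2).-tuple R) (i j : nat) : F :=
  if i == 0%N then (if j == n.+1 then -1 else 0)
  else if j == 0%N then (if i == n.+1 then -1 else 0)
  else if (i == n.+1) || (j == n.+1) then 0
  else a_coef mu i j.

Definition B0 (n : nat) (mu : (n.+2).-tuple R) (x y : R) : F :=
  \sum_(i < n.+2) \sum_(j < n.+2)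
     coord mu i x * coord mu j y * B0_basis mu i j.

End LocalAlg.

From Pilot Require Import Defs.
From HB Require Import structures.
From mathcomp Require Import all_boot all_order all_algebra all_field.
From Stdlib Require Import Classical.
Import Order.TTheory GRing.Theory Num.Theory.
Set Implicit Arguments. Unset Strict Implicit. Unset Printing Implicit Defensive.
Local Open Scope ring_scope.

(* Call [a] self-adjoint (resp. skew-adjoint) for [B] when multiplication by
   [a] satisfies B(ax, y) = B(x, ay) (resp. = -B(x, ay)).  The generators
   mu_1 .. mu_n are skew-adjoint by hypothesis, so products of [k] of them
   have the parity of [k]; since they generate [R], every element is a sum of
   a self-adjoint and a skew-adjoint part, uniquely by nondegeneracy.
   Skew-adjoint elements are orthogonal to [1], which gives parts (1)-(2).
   Writing the last basis vector as z = p + q (p self-adjoint, q skew), one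
   finds that the skew-adjoint elements are exactly the span G of the
   generators and the self-adjoint ones are spanned by [1] and [p]; [p] lies
   in [m], so p^2 = 0 (no idempotents in the maximal ideal of a local algebra),
   G p = 0 and G G is in the line of [p].  Hence m^2 is that line, and the
   proper-basis condition forces m^2 = <[z]> (part (4)); parts (3) and (5)
   follow by evaluating [B] on the basis. *)

Section SymmetricForm.
Variables (F : fieldType) (V : vectType F) (B : V -> V -> F).
Hypothesis Blin : forall (a : F) (x y z : V), B (a *: x + y) z = a * B x z + B y z.
Hypothesis Bsym : forall x y, B x y = B y x.

Lemma form0l y : B 0 y = 0.
Proof. by apply: (addrI (B 0 y)); rewrite -{1}[B 0 y]mul1r -Blin scale1r !addr0. Qed.

Lemma formDl x y w : B (x + y) w = B x w + B y w.
Proof. by rewrite -{1}[x]scale1r Blin mul1r. Qed.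

Lemma formZl a x w : B (a *: x) w = a * B x w.
Proof. by rewrite -[a *: x]addr0 Blin form0l addr0. Qed.

Lemma form0r y : B y 0 = 0.
Proof. by rewrite Bsym form0l. Qed.

Lemma formDr x y w : B w (x + y) = B w x + B w y.
Proof. by rewrite Bsym formDl !(Bsym w). Qed.

Lemma formZr a x w : B w (a *: x) = a * B w x.
Proof. by rewrite Bsym formZl Bsym. Qed.

Lemma form_suml (I : Type) (r : seq I) (P : pred I) (f : I -> V) w :
  B (\sum_(i <- r | P i) f i) w = \sum_(i <- r | P i) B (f i) w.
Proof. exact: (big_morph (B^~ w) (fun x y => formDl x y w) (form0l w)). Qed.

Lemma form_sumr (I : Type) (r : seq I) (P : pred I) (f : I -> V) w :
  B w (\sum_(i <- r | P i) f i) = \sum_(i <- r | P i) B w (f i).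
Proof. by rewrite Bsym form_suml; apply: eq_bigr => i _; rewrite Bsym. Qed.

Lemma form_expand k (X : k.-tuple V) x y : basis_of fullv X ->
  B x y = \sum_(i < k) \sum_(j < k) coord X i x * coord X j y * B X`_i X`_j.
Proof.
move=> Xbasis; rewrite {1}(coord_basis Xbasis (memvf x)) form_suml.
apply: eq_bigr => i _; rewrite formZl {1}(coord_basis Xbasis (memvf y)).
by rewrite form_sumr mulr_sumr; apply: eq_bigr => j _; rewrite formZr mulrA.
Qed.

End SymmetricForm.

Lemma memv_span_ind (F : fieldType) (V : vectType F) (P : V -> Prop) (s : seq V) :
  P 0 -> (forall a x y, P x -> P y -> P (a *: x + y)) ->
  {in s, forall v, P v} -> forall x, x \in <<s>>%VS -> P x.
Proof.
move=> P0 Plin Ps x; rewrite -[s]/(val (in_tuple s)) => /coord_span ->.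
apply: big_ind => //; first by move=> a b Pa Pb; rewrite -[a]scale1r; apply: Plin.
move=> i _; rewrite -[_ *: _]addr0; apply: Plin => //; apply: Ps.
by rewrite mem_nth // size_tuple.
Qed.

Lemma memv_prod_ind (F : fieldType) (A : falgType F) (P : A -> Prop)
    (U W : {vspace A}) :
  P 0 -> (forall a x y, P x -> P y -> P (a *: x + y)) ->
  {in U & W, forall u w, P (u * w)} -> forall x, x \in (U * W)%VS -> P x.
Proof.
move=> P0 Plin Puw; rewrite unlock; apply: memv_span_ind => //.
by move=> _ /allpairsP[[u w] /= [Uu Ww ->]]; apply: Puw; apply: vbasis_mem.
Qed.

Lemma eq_opp_self0 (F : fieldType) (x : F) : 2 != 0 :> F -> x = - x -> x = 0.
Proof.
move=> two_neq0 /eqP; rewrite -subr_eq0 opprK -mulr2n -mulr_natr mulf_eq0.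
by rewrite (negPf two_neq0) orbF => /eqP.
Qed.

Section AdjointParity.
Variables (F : fieldType) (R : falgType F) (B : R -> R -> F).
Hypothesis Blin : forall (a : F) (x y z : R), B (a *: x + y) z = a * B x z + B y z.
Hypothesis Bsym : forall x y, B x y = B y x.
Hypothesis Rcomm : forall x y : R, x * y = y * x.

Definition parity (k : nat) (a : R) : Prop :=
  forall x y, B (a * x) y = (-1) ^+ k * B x (a * y).

Lemma parity_lin k c a b : parity k a -> parity k b -> parity k (c *: a + b).
Proof.
move=> Ha Hb x y; rewrite !mulrDl -!scalerAl formDl // formDr // formZl //.
by rewrite formZr // Ha Hb mulrDr mulrCA.
Qed.

Lemma parityD k a b : parity k a -> parity k b -> parity k (a + b).
Proof. by rewrite -{2}[a]scale1r; apply: parity_lin. Qed.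

Lemma parityB k a b : parity k a -> parity k b -> parity k (a - b).
Proof.
by move=> Ha Hb; rewrite addrC -scaleN1r; apply: parity_lin.
Qed.

Lemma parity0 k : parity k 0.
Proof. by move=> x y; rewrite !mul0r form0l // form0r // mulr0. Qed.

Lemma parityZ k c a : parity k a -> parity k (c *: a).
Proof. by move=> Ha; rewrite -[c *: a]addr0; apply: parity_lin => //; apply: parity0. Qed.

Lemma parity1 : parity 0 1.
Proof. by move=> x y; rewrite !mul1r. Qed.

Lemma parityM k l a b : parity k a -> parity l b -> parity (k + l) (a * b).
Proof.
move=> Ha Hb x y.
by rewrite -mulrA Ha Hb mulrA -exprD [b * (a * y)]mulrA (Rcomm b a).
Qed.

Lemma parity_mod2 k a : parity k a -> parity (odd k) a.
Proof. by move=> Ha x y; rewrite Ha signr_odd. Qed.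

Lemma parity_expv (G : {vspace R}) : {in G, forall a, parity 1 a} ->
  forall i a, a \in (G ^+ i)%VS -> parity i a.
Proof.
move=> Godd; elim=> [|i IHi] a.
  by rewrite expv0 => /vlineP[c ->]; apply/parityZ/parity1.
rewrite expvSl; move: a; apply: memv_prod_ind => [|c x y|u v Gu Gv].
- exact: parity0.
- exact: parity_lin.
- exact: parityM (Godd u Gu) (IHi v Gv).
Qed.

Lemma parity_agenv (G : {vspace R}) : {in G, forall a, parity 1 a} ->
  forall x, x \in agenv G -> exists e o, [/\ x = e + o, parity 0 e & parity 1 o].
Proof.
move=> Godd x /memv_sumP[xs Hxs ->].
apply: (big_ind (fun x => exists e o, [/\ x = e + o, parity 0 e & parity 1 o])).
- by exists 0, 0; rewrite addr0; split => //; apply: parity0.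
- move=> _ _ [e1 [o1 [-> He1 Ho1]]] [e2 [o2 [-> He2 Ho2]]].
  by exists (e1 + e2), (o1 + o2); rewrite addrACA; split => //; apply: parityD.
- move=> i _; have := parity_mod2 (parity_expv Godd (Hxs i isT)).
  case: (odd i) => /= Hi; first by exists 0, (xs i); rewrite add0r; split => //; apply: parity0.
  by exists (xs i), 0; rewrite addr0; split => //; apply: parity0.
Qed.

Hypothesis two_neq0 : 2 != 0 :> F.

Lemma skew_orth1 a : parity 1 a -> B 1 a = 0.
Proof.
move=> Ha; apply: eq_opp_self0 => //.
by have := Ha 1 1; rewrite !mulr1 expr1 mulN1r Bsym.
Qed.

Hypothesis Bnd : forall x, (forall y, B x y = 0) -> x = 0.

Lemma parity_even_odd0 a : parity 0 a -> parity 1 a -> a = 0.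
Proof.
move=> Ha0 Ha1; apply: Bnd => y; apply: eq_opp_self0 => //.
have := Ha0 1 y; rewrite mulr1 expr0 mul1r => {1}->.
by have := Ha1 1 y; rewrite mulr1 expr1 mulN1r => ->; rewrite opprK.
Qed.

Lemma parity_split_uniq e1 e2 o1 o2 :
  parity 0 e1 -> parity 0 e2 -> parity 1 o1 -> parity 1 o2 ->
  e1 + o1 = e2 + o2 -> e1 = e2 /\ o1 = o2.
Proof.
move=> He1 He2 Ho1 Ho2 E.
have Ediff : e1 - e2 = o2 - o1.
  by rewrite -[e1](addrK o1) E addrAC [e2 + o2]addrC addrK.
have /eqP : e1 - e2 = 0.
  by apply: parity_even_odd0; [exact: parityB | rewrite Ediff; exact: parityB].
rewrite subr_eq0 => /eqP Ee; split => //.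
by move: E; rewrite Ee => /addrI.
Qed.

End AdjointParity.

Arguments parity1 {F R B}.

Section LocalAlgebra.
Variables (F : fieldType) (A : falgType F).

Lemma nonmaximal_ideal_ext (I : {vspace A}) :
  Defs.proper_ideal I -> ~ maximal_ideal I ->
  exists J, [/\ Defs.proper_ideal J, (I <= J)%VS & (\dim I < \dim J)%N].
Proof.
move=> PI NMI; apply: NNPP => noJ; apply: NMI; split=> // J PJ IJ.
apply/eqP; rewrite eq_sym -(dimv_leqif_eq IJ) eqn_leq dimvS //= leqNgt.
by apply/negP => ltIJ; apply: noJ; exists J.
Qed.

Lemma ex_maximal_ideal (I : {vspace A}) :
  Defs.proper_ideal I -> exists J, maximal_ideal J /\ (I <= J)%VS.
Proof.
suff: forall k (I : {vspace A}), (\dim {:A} <= k + \dim I)%N ->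
    Defs.proper_ideal I -> exists J, maximal_ideal J /\ (I <= J)%VS.
  by move/(_ _ I (leq_addr _ _)); apply.
elim=> [|k IHk] {}I codimI PI; have [MI|NMI] := classic (maximal_ideal I).
all: try by exists I.
all: have [J [PJ IJ ltIJ]] := nonmaximal_ideal_ext PI NMI.
  by move: (dimvS (subvf J)); rewrite leqNgt (leq_ltn_trans codimI ltIJ).
have [|K [MK JK]] := IHk J _ PJ; first by rewrite (leq_trans codimI) // addSnnS leq_add2l.
by exists K; split => //; apply: subv_trans JK.
Qed.

Hypothesis Acomm : forall x y : A, x * y = y * x.
Variable m : {vspace A}.
Hypotheses (m_max : maximal_ideal m) (m_uniq : forall J, maximal_ideal J -> J = m).

Lemma local_idempotent0 f : f \in m -> f * f = f -> f = 0.
Proof.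
move=> fm ff; have [[m_ideal m1] _] := m_max.
pose J := (<[1 - f]> * fullv)%VS.
have fJ0 : forall y, y \in J -> f * y = 0.
  apply: memv_prod_ind => [|a x y fx fy|u v /vlineP[c ->] _]; first by rewrite mulr0.
    by rewrite mulrDr -scalerAr fx fy scaler0 addr0.
  by rewrite -scalerAl -scalerAr mulrA mulrBr mulr1 ff subrr mul0r scaler0.
have [J1|J1] := boolP (1 \in J); first by rewrite -[f]mulr1 fJ0.
have J_ideal : is_ideal J.
  move=> r x xJ; suff xrJ : x * r \in J by rewrite Acomm.
  have : x * r \in (J * fullv)%VS by rewrite memv_mul ?memvf.
  by apply/subvP; rewrite /J -prodvA prodvSr ?subvf.
have [K [MK JK]] := ex_maximal_ideal (conj J_ideal J1).
have fm1 : 1 - f \in m.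
  by rewrite -(m_uniq MK); apply: (subvP JK); rewrite -[1 - f]mulr1 memv_mul ?memv_line ?memvf.
by case/negP: m1; rewrite -(subrK f 1) memvD.
Qed.
End LocalAlgebra.

Section Lemma6.
Variables (F : fieldType) (R : falgType F) (n : nat) (m : {vspace R}).
Variables (mu : (n.+2).-tuple R) (B : R -> R -> F).
Hypothesis two_neq0 : 2 != 0 :> F.
Hypotheses (Rcomm : forall x y : R, x * y = y * x) (m_max : maximal_ideal m).
Hypothesis m_uniq : forall J, maximal_ideal J -> J = m.
Hypothesis dimR_m : \dim {:R} = (\dim m).+1.
Hypothesis dimR : \dim {:R} = (n + 2)%N.
Hypotheses (mu_basis : basis_of fullv mu) (mu0 : mu`_0 = 1).

Local Notation z := mu`_n.+1.
Local Notation G := <<[seq mu`_i | i <- iota 1 n]>>%VS.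

Hypothesis mu_gen : agenv G = fullv.
Hypothesis mu_m : forall i, (1 <= i <= n)%N -> mu`_i \in m.
Hypothesis m_pow_mask : forall k, exists J, ideal_pow m k = <<mask J mu>>%VS.
Hypothesis Blin : forall (a : F) (x y w : R), B (a *: x + y) w = a * B x w + B y w.
Hypothesis Bsym : forall x y, B x y = B y x.
Hypothesis Bnd : forall x, (forall y, B x y = 0) -> x = 0.
Hypothesis Binv : forall i, (1 <= i <= n)%N ->
  forall x y, B (mu`_i * x) y + B x (mu`_i * y) = 0.
Hypothesis B11 : B 1 1 = 0.

Local Notation sym := (parity B 0).
Local Notation skew := (parity B 1).

Lemma index_cases k : (k < n.+2)%N -> [\/ k = 0%N, (1 <= k <= n)%N | k = n.+1].
Proof.
case: k => [|k] ltk; first by constructor 1.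
rewrite ltnS leq_eqVlt in ltk; case/orP: ltk => [/eqP->|]; first by constructor 3.
by constructor 2.
Qed.

Lemma mu_neq0 k : (k < n.+2)%N -> mu`_k != 0.
Proof.
by move=> ltk; apply: free_not0 (basis_free mu_basis) _; rewrite mem_nth ?size_tuple.
Qed.

Lemma mu_in_G i : (1 <= i <= n)%N -> mu`_i \in G.
Proof.
by move=> Hi; apply/memv_span/(map_f (nth 0 mu)); rewrite mem_iota add1n ltnS.
Qed.

Lemma G_skew : {in G, forall a, skew a}.
Proof.
apply: memv_span_ind => [|c a b|v /mapP[i]]; [exact: parity0 | exact: parity_lin |].
rewrite mem_iota add1n ltnS => Hi -> x y.
by apply/eqP; rewrite expr1 mulN1r -addr_eq0 (Binv Hi).
Qed.

Lemma G_sub_m : (G <= m)%VS.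
Proof.
by apply/span_subvP => v /mapP[i]; rewrite mem_iota add1n ltnS => Hi ->; apply: mu_m.
Qed.

Lemma scalar_in_m c : c *: 1 \in m -> c = 0.
Proof.
have [[_ m1] _] := m_max; move=> cm; apply/eqP; apply: contraT => c_neq0.
by case/negP: m1; rewrite -(scalerK c_neq0 1) memvZ.
Qed.

Lemma basis_decomp y : exists c0 g c, g \in G /\ y = c0 *: 1 + g + c *: z.
Proof.
rewrite (coord_basis mu_basis (memvf y)) big_ord_recl big_ord_recr /= mu0.
set g := \sum_(i < n) _; do 3 eexists; split; last by rewrite addrA.
by apply: memv_suml => i _; apply/memvZ/mu_in_G; rewrite /= /bump leq0n add1n ltn_ord.
Qed.

Lemma z_split : exists p q, [/\ z = p + q, sym p & skew q].
Proof. by apply: parity_agenv => //; [exact: G_skew | rewrite mu_gen memvf]. Qed.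

Lemma ideal_pow1 : ideal_pow m 1 = m.
Proof.
have [[m_ideal _] _] := m_max; apply/eqP; rewrite eqEsubv /ideal_pow /=.
apply/andP; split; last by rewrite -{1}(prodv1 m) prodvSr ?subvf.
by apply/prodvP => x r xm _; exact: (m_ideal r x xm).2.
Qed.

Lemma ideal_pow2 : ideal_pow m 2 = (m * m)%VS.
Proof. by rewrite -{3}ideal_pow1. Qed.

(* [z] lies in [m]: otherwise [m], spanned by basis vectors other than [1]
   and [z], would sit in the [n]-dimensional [G]. *)
Lemma z_in_m : z \in m.
Proof.
have [[_ m1] _] := m_max; have [J mJ] := m_pow_mask 1; rewrite ideal_pow1 in mJ.
apply: contraT => zNm; have: (\dim m <= n)%N.
  rewrite -(size_iota 1 n) -(size_map (nth 0 mu)); apply: leq_trans (dim_span _).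
  rewrite dimvS // mJ; apply/span_subvP => v vJ.
  have vm : v \in m by rewrite mJ memv_span.
  have /(nthP 0)[k ltk vk] := mem_mask vJ; rewrite size_tuple in ltk.
  case: (index_cases ltk) => [k0|Hk|kz]; last 1 first.
  - by move: zNm; rewrite kz in vk; rewrite vk vm.
  - by move: m1; rewrite k0 in vk; rewrite -mu0 vk vm.
  - by rewrite -vk mu_in_G.
by rewrite -ltnS -dimR_m dimR addn2 ltnn.
Qed.

Lemma agenv_sub : (agenv G <= <[1]> + G + ideal_pow m 2)%VS.
Proof.
apply/subv_sumP => -[[|[|j]] _] _ /=.
- by rewrite expv0 -addvA addvSl.
- by rewrite expv1 (subv_trans _ (addvSl _ _)) // addvSr.
- apply: subv_trans (addvSr _ _); rewrite 2!expvSl.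
  by apply: prodvS G_sub_m _; apply: prodvS G_sub_m (subvf _).
Qed.

Lemma mu_mul_in_m2 i j : (1 <= i <= n)%N -> (1 <= j <= n)%N ->
  mu`_i * mu`_j \in ideal_pow m 2.
Proof. by move=> Hi Hj; rewrite ideal_pow2 memv_mul ?mu_m. Qed.

Lemma B1_mu i : (1 <= i <= n)%N -> B 1 mu`_i = 0.
Proof. by move=> Hi; apply: skew_orth1 => //; apply/G_skew/mu_in_G. Qed.

Lemma B_mu_mu i j : (1 <= i <= n)%N -> B mu`_i mu`_j = - B 1 (mu`_i * mu`_j).
Proof.
by move=> Hi; have := G_skew (mu_in_G Hi) 1 mu`_j; rewrite mulr1 expr1 mulN1r.
Qed.

Section SplitOfZ.
Variables p q : R.
Hypotheses (z_pq : z = p + q) (p_sym : sym p) (q_skew : skew q).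

Lemma sym_comb c0 c : sym (c0 *: 1 + c *: p).
Proof. by apply: parityD => //; apply: parityZ => //; exact: parity1. Qed.

Lemma skew_comb g c : g \in G -> skew (g + c *: q).
Proof. by move=> gG; apply: parityD => //; [exact: G_skew | exact: parityZ]. Qed.

Lemma basis_split y : exists c0 c g, g \in G /\ y = (c0 *: 1 + c *: p) + (g + c *: q).
Proof.
have [c0 [g [c [gG ->]]]] := basis_decomp y.
by exists c0, c, g; rewrite z_pq scalerDr addrACA.
Qed.

Lemma orth_test x :
  B x 1 = 0 -> B x p = 0 -> (forall b, skew b -> B x b = 0) -> x = 0.
Proof.
move=> x1 xp xskew; apply: Bnd => y; have [c0 [c [g [gG ->]]]] := basis_split y.
by rewrite !formDr // !formZr // x1 xp (xskew g (G_skew gG)) (xskew q q_skew) !mulr0 !addr0.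
Qed.

Lemma B1p : B 1 p = B 1 z.
Proof. by rewrite z_pq formDr // (skew_orth1 _ _ q_skew) ?addr0. Qed.

(* Part (3), second half: [1] would otherwise be orthogonal to everything. *)
Lemma B1z_neq0 : B 1 z != 0.
Proof.
apply/eqP => B1z0; have /eqP := @oner_neq0 R; apply.
by apply: orth_test B11 _ _ => [|b]; [rewrite B1p | exact: skew_orth1].
Qed.

Lemma p_neq0 : p != 0.
Proof. by apply: contraNneq B1z_neq0 => p0; rewrite -B1p p0 form0r. Qed.

Lemma one_p_free c0 c : c0 *: 1 + c *: p = 0 -> c0 = 0 /\ c = 0.
Proof.
move=> E; suff c_eq0 : c = 0.
  by move: E; rewrite c_eq0 scale0r addr0 => /eqP; rewrite scaler_eq0 oner_eq0 orbF => /eqP.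
apply/eqP; apply: contraT => c_neq0; case/negP: B1z_neq0.
have Ecp : c *: p = - (c0 *: 1) by apply/eqP; rewrite -addr_eq0 addrC E.
have : c * B 1 p = 0 by rewrite -formZr // Ecp -scaleNr formZr // B11 mulr0.
by move/eqP; rewrite mulf_eq0 (negPf c_neq0) B1p.
Qed.

Lemma skew_in_G x : skew x -> x \in G.
Proof.
move=> x_skew; have [c0 [c [g [gG Ex]]]] := basis_split x.
have [E1 E2] := parity_split_uniq Blin Bsym two_neq0 Bnd (parity0 Blin Bsym 0)
  (sym_comb c0 c) x_skew (skew_comb c gG) (etrans (add0r x) Ex).
by have [_ c_eq0] := one_p_free (esym E1); rewrite E2 c_eq0 scale0r addr0.
Qed.

Lemma sym_span x : sym x -> exists c0 c, x = c0 *: 1 + c *: p.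
Proof.
move=> x_sym; have [c0 [c [g [gG Ex]]]] := basis_split x; exists c0, c.
by have [] := parity_split_uniq Blin Bsym two_neq0 Bnd x_sym (sym_comb c0 c)
  (parity0 Blin Bsym 1) (skew_comb c gG) (etrans (addr0 x) Ex).
Qed.

Lemma p_in_m : p \in m.
Proof.
by rewrite -(addrK q p) -z_pq memvB ?z_in_m // (subvP G_sub_m) // skew_in_G.
Qed.

Lemma sym_in_m x : sym x -> x \in m -> x \in <[p]>%VS.
Proof.
move=> /sym_span[c0 [c ->]] xm; suff -> : c0 = 0 by rewrite scale0r add0r memvZ ?memv_line.
by apply: scalar_in_m; rewrite -(addrK (c *: p) (c0 *: 1)) memvB // memvZ // p_in_m.
Qed.

Lemma m_split x : x \in m -> exists a c, skew a /\ x = a + c *: p.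
Proof.
move=> xm; have [c0 [c [g [gG Ex]]]] := basis_split x.
have gq_m : g + c *: q \in m by rewrite memvD ?memvZ // (subvP G_sub_m) // skew_in_G.
have c0_eq0 : c0 = 0.
  apply: scalar_in_m; have -> : c0 *: 1 = x - c *: p - (g + c *: q).
    by rewrite Ex addrAC !addrK.
  by rewrite !memvB ?memvZ ?p_in_m.
exists (g + c *: q), c; split; first exact: skew_comb.
by rewrite Ex c0_eq0 scale0r add0r addrC.
Qed.

(* [p^2] is a multiple of [p] in [m], hence zero since [m] contains no
   nonzero idempotent. *)
Lemma p_sq : p * p = 0.
Proof.
have [[m_ideal _] _] := m_max.
have pp_sym : sym (p * p) := parityM Rcomm p_sym p_sym.
have /vlineP[lam Epp] := sym_in_m pp_sym (m_ideal p p p_in_m).1.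
have [lam0|lam_neq0] := eqVneq lam 0; first by rewrite Epp lam0 scale0r.
have idem : lam^-1 *: p * (lam^-1 *: p) = lam^-1 *: p.
  by rewrite -scalerAl -scalerAr Epp !scalerA -mulrA mulVf // mulr1.
have := local_idempotent0 Rcomm m_max m_uniq (memvZ _ p_in_m) idem.
by move/eqP; rewrite scaler_eq0 invr_eq0 (negPf lam_neq0) (negPf p_neq0).
Qed.

Lemma B_pp : B p p = 0.
Proof. by have := p_sym 1 p; rewrite mulr1 p_sq form0r // mulr0. Qed.

Lemma skew_mul_skew a b : skew a -> skew b -> a * b \in <[p]>%VS.
Proof.
have [[m_ideal _] _] := m_max; move=> a_skew b_skew.
apply: sym_in_m; first exact: (parity_mod2 (parityM Rcomm a_skew b_skew)).
by apply: (m_ideal a b _).1; rewrite (subvP G_sub_m) // skew_in_G.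
Qed.

Lemma skew_mul_p a : skew a -> a * p = 0.
Proof.
move=> a_skew; apply: orth_test.
- by rewrite Bsym (skew_orth1 Bsym two_neq0 (parityM Rcomm a_skew p_sym)).
- rewrite a_skew; have := p_sym 1 (a * p); rewrite mulr1 => ->.
  by rewrite (Rcomm a p) (mulrA p p a) p_sq mul0r form0r // !mulr0.
- move=> b b_skew; rewrite a_skew.
  by have /vlineP[c ->] := skew_mul_skew a_skew b_skew; rewrite formZr // B_pp !mulr0.
Qed.

(* Writing elements of [m] as [a + c p] with [a] skew, [m^2] lies on the
   line of [p]. *)
Lemma m2_sub_p : (ideal_pow m 2 <= <[p]>)%VS.
Proof.
rewrite ideal_pow2; apply/prodvP => _ _ /m_split[a [c [a_skew ->]]] /m_split[b [d [b_skew ->]]].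
rewrite mulrDl !mulrDr -!scalerAl -!scalerAr (Rcomm p b) (skew_mul_p a_skew) (skew_mul_p b_skew) p_sq.
by rewrite !scaler0 !addr0 skew_mul_skew.
Qed.

(* [m^2] is not zero: otherwise [z] would lie in [<[1]> + G] and [p] would be
   a scalar. *)
Lemma m2_eq_p : ideal_pow m 2 = <[p]>%VS.
Proof.
apply/eqP; rewrite eqEdim m2_sub_p dim_vline p_neq0 lt0n dimv_eq0; apply/eqP => m2_0.
have := subvP agenv_sub z; rewrite mu_gen memvf m2_0 addv0.
case/(_ isT)/memv_addP => _ /vlineP[c0 ->] [g gG Ez].
have [Ep _] := parity_split_uniq Blin Bsym two_neq0 Bnd p_sym (parityZ Blin Bsym c0 parity1)
  q_skew (G_skew gG) (etrans (esym z_pq) Ez).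
have [_ /eqP] : - c0 = 0 /\ 1 = 0 :> F.
  by apply: one_p_free; rewrite Ep scale1r scaleNr addNr.
by rewrite oner_eq0.
Qed.

(* Part (4): [m^2] is spanned by a basis vector, which can be neither [1]
   (not in [m]) nor a generator (skew-adjoint, while [m^2] is self-adjoint),
   so it is [z]. *)
Lemma z_in_m2 : z \in ideal_pow m 2.
Proof.
have [[_ m1] _] := m_max; have [J m2J] := m_pow_mask 2.
have [v vJ] : exists v, v \in mask J mu.
  case EJ: (mask J mu) => [|v s]; last by exists v; rewrite mem_head.
  have : p \in ideal_pow m 2 by rewrite m2_eq_p memv_line.
  by rewrite m2J EJ span_nil memv0 (negPf p_neq0).
have v_m2 : v \in ideal_pow m 2 by rewrite m2J memv_span.
have /(nthP 0)[k ltk vk] := mem_mask vJ; rewrite size_tuple in ltk.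
have v_sym : sym v by move: v_m2; rewrite m2_eq_p => /vlineP[c ->]; exact: parityZ.
case: (index_cases ltk) => [k0|Hk|kz].
- case/negP: m1; rewrite k0 in vk; rewrite -mu0 vk.
  by move: v_m2; rewrite m2_eq_p => /vlineP[c ->]; rewrite memvZ // p_in_m.
- case/eqP: (mu_neq0 ltk); rewrite vk.
  by apply: (parity_even_odd0 two_neq0 Bnd v_sym); rewrite -vk; apply/G_skew/mu_in_G.
- by rewrite kz in vk; rewrite vk.
Qed.

Lemma m2_eq_z : ideal_pow m 2 = <[z]>%VS.
Proof.
apply/esym/eqP; rewrite eqEdim -memvE z_in_m2 m2_eq_p !dim_vline p_neq0.
by rewrite mu_neq0.
Qed.

Lemma z_in_p : z \in <[p]>%VS.
Proof. by rewrite -m2_eq_p z_in_m2. Qed.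

Lemma z_sym : sym z.
Proof. by have /vlineP[c ->] := z_in_p; exact: parityZ. Qed.

Lemma z_sq : z * z = 0.
Proof.
by have /vlineP[c ->] := z_in_p; rewrite -scalerAl -scalerAr p_sq !scaler0.
Qed.

Lemma B_mu_z i : (1 <= i <= n.+1)%N -> B mu`_i z = 0.
Proof.
move=> /andP[i_gt0]; rewrite leq_eqVlt ltnS => /orP[/eqP-> | i_le_n].
  by have := z_sym 1 z; rewrite mulr1 z_sq form0r // mulr0.
have Hi : (1 <= i <= n)%N by rewrite i_gt0.
have mu_skew := G_skew (mu_in_G Hi).
have /vlineP[c ->] := z_in_p.
by have := mu_skew 1 (c *: p); rewrite mulr1 -scalerAr skew_mul_p // scaler0 form0r // mulr0.
Qed.

Hypothesis B1z : B 1 z = -1.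

Lemma gen_index i : (1 <= i <= n)%N -> (i == 0)%N = false /\ (i == n.+1) = false.
Proof. by case/andP=> i_gt0 i_le_n; rewrite gtn_eqF // ltn_eqF. Qed.

Lemma coord_mu_mul i j : (1 <= i <= n)%N -> (1 <= j <= n)%N ->
  mu`_i * mu`_j = a_coef mu i j *: z.
Proof.
move=> Hi Hj; rewrite /a_coef.
have := mu_mul_in_m2 Hi Hj; rewrite m2_eq_z => /vlineP[d ->].
by rewrite linearZ /= (coord_free ord_max ord_max (basis_free mu_basis)) eqxx mulr1.
Qed.

Lemma B_gram (i j : 'I_n.+2) : B mu`_i mu`_j = B0_basis mu i j.
Proof.
rewrite /B0_basis.
case: (index_cases (ltn_ord i)) => [->|Hi|->]; case: (index_cases (ltn_ord j)) => [->|Hj|->];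
  try (have [-> ->] := gen_index Hi); try (have [-> ->] := gen_index Hj);
  rewrite /= ?eqxx ?orbT ?mu0 //=.
- by rewrite B1_mu.
- by rewrite Bsym B1_mu.
- by rewrite B_mu_mu // coord_mu_mul // formZr // B1z mulrN1 opprK.
- by case/andP: Hi => i_gt0 i_le_n; rewrite B_mu_z // i_gt0 (leqW i_le_n).
- by rewrite Bsym.
- by case/andP: Hj => j_gt0 j_le_n; rewrite Bsym B_mu_z // j_gt0 (leqW j_le_n).
- by apply: B_mu_z; rewrite leqnn.
Qed.

Lemma B_eq_B0 x y : B x y = B0 mu x y.
Proof.
rewrite (form_expand Blin Bsym x y mu_basis) /B0.
by apply: eq_bigr => i _; apply: eq_bigr => j _; rewrite B_gram.
Qed.

End SplitOfZ.

Lemma z_normal_form :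
  [/\ (forall i, (1 <= i <= n.+1)%N -> B mu`_i z = 0) /\ B 1 z != 0,
      \dim (ideal_pow m 2) = 1%N /\ ideal_pow m 2 = <[z]>%VS
    & B 1 z = -1 -> forall x y, B x y = B0 mu x y].
Proof.
have [p [q [z_pq p_sym q_skew]]] := z_split.
split; first by split; [exact: B_mu_z z_pq p_sym q_skew | exact: B1z_neq0 z_pq q_skew].
  by rewrite (m2_eq_z z_pq p_sym q_skew) dim_vline mu_neq0.
by move=> B1z; exact: B_eq_B0 z_pq p_sym q_skew B1z.
Qed.

End Lemma6.

Theorem lemma6 (C : numClosedFieldType) (R : falgType C) (n : nat)
  (m : {vspace R}) (mu : (n.+2).-tuple R) (B : R -> R -> C)
  (Hloc : local_algebra_with m)
  (Hdim : \dim {:R} = (n + 2)%N)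
  (Hbasis : proper_nfactor_basis m mu)
  (Blin : forall (a : C) (x y z : R), B (a *: x + y) z = a * B x z + B y z)
  (Bsym : forall x y, B x y = B y x)
  (Bnd : forall x, (forall y, B x y = 0) -> x = 0)
  (Binv : forall i, (1 <= i <= n)%N ->
            forall x y, B (mu`_i * x) y + B x (mu`_i * y) = 0)
  (B11 : B 1 1 = 0) :
  [/\ (forall i, (1 <= i <= n)%N -> B 1 mu`_i = 0),
      (forall i j, (1 <= i <= n)%N -> (1 <= j <= n)%N ->
          B mu`_i mu`_j = - B 1 (mu`_i * mu`_j)),
      (forall i, (1 <= i <= n.+1)%N -> B mu`_i mu`_(n.+1) = 0)
        /\ B 1 mu`_(n.+1) != 0,
      \dim (ideal_pow m 2) = 1%N /\ ideal_pow m 2 = <[mu`_(n.+1)]>%VS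
    & B 1 mu`_(n.+1) = -1 -> forall x y, B x y = B0 mu x y].
Proof.
case: Hloc => Rcomm m_max m_uniq dimR_m.
case: Hbasis => [[mu_basis mu0] mu_gen mu_m _ m_pow_mask].
have two_neq0 : 2 != 0 :> C by rewrite pnatr_eq0.
have [B_z m2_z B_B0] := z_normal_form two_neq0 Rcomm m_max m_uniq dimR_m Hdim
  mu_basis mu0 mu_gen mu_m m_pow_mask Blin Bsym Bnd Binv B11.
by split => //; [exact: B1_mu | move=> i j Hi _; exact: B_mu_mu].
Qed.
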